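(* Consider a hyperfractal with $n$ nodes and $d_F>2$, with radio range $R_n=1/\sqrt{n}$. Let $\epsilon>0$ and $H(n)=\left\lceil\frac{\log(n^{1/2-\epsilon}p/2)}{\log(2/q)}\right\rceil$. Then the probability that a street of level $H(n)$ has at least one inter-node gap larger than $R_n$ is at most $n e^{-(q/2)n^{\epsilon}}$.
   Context: Hyperfractal model: the map is the unit square $[0,1]^2$. For $l\ge 0$ let $\mathcal{X}_l=\{(b2^{-(l+1)},y): b=1,3,\dots,2^{l+1}-1,\ y\in[0,1]\}\cup\{(x,b2^{-(l+1)}): b=1,3,\dots,2^{l+1}-1,\ x\in[0,1]\}$; each such segment is a street of level $l$. Fix $p\in(0,1)$, $q=1-p$; $d_F=\log(4/q)/\log 2$. The $n$ mobile nodes form a Poisson point process on $\bigcup_l\mathcal{X}_l$ with total mean $n$ and one-dimensional intensity $\lambda_l=n(p/2)(q/2)^l$ on $\mathcal{X}_l$. An inter-node gap on a street is the distance between a node and the next node along that street. *)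

From HB Require Import structures.
From mathcomp Require Import all_boot all_order all_algebra.
From mathcomp Require Import all_classical all_reals all_analysis.
Set Implicit Arguments. Unset Strict Implicit. Unset Printing Implicit Defensive.
Import Order.TTheory GRing.Theory Num.Theory.
Local Open Scope classical_set_scope.
Local Open Scope ring_scope.

(* Poisson probability mass function with mean m >= 0:
   P(N = k) = e^{-m} m^k / k!  (with 0^0 = 1, so mean 0 gives the Dirac mass at 0). *)
Definition pois_pmf (R : realType) (m : R) (k : nat) : R :=
  expR (- m) * m ^+ k / k`!%:R.

Definition npts (R : realType) (s : seq R) (A : set R) : nat :=
  count (fun x => `[< A x >]) s.

(* A homogeneous Poisson point process of (one-dimensional) intensity lam on the
   unit segment [0,1] (a street, parametrized by arclength), realized as a random
   finite configuration of points pts : T -> seq R on the probability space P: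
   - all points lie in the segment;
   - for every Borel A included in [0,1], the count N(A) is a random variable
     with Poisson law of mean lam * Leb(A);
   - counts of pairwise disjoint Borel subsets are (mutually) independent. *)
Definition poisson_process_on_unit_segment (R : realType) (d : measure_display)
    (T : measurableType d) (P : probability T R) (lam : R) (pts : T -> seq R) : Prop :=
  [/\ (forall w x, x \in pts w -> 0 <= x <= 1),
      (forall (A : set R) (k : nat), measurable A -> A `<=` `[0, 1]%classic ->
         measurable [set w | npts (pts w) A = k]),
      (forall (A : set R) (k : nat), measurable A -> A `<=` `[0, 1]%classic ->
         P [set w | npts (pts w) A = k] =
         (pois_pmf (lam * fine (lebesgue_measure A)) k)%:E) &
      (forall (m : nat) (A : 'I_m -> set R) (k : 'I_m -> nat),
         (forall i, measurable (A i)) -> (forall i, A i `<=` `[0, 1]%classic) ->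
         (forall i j, i != j -> A i `&` A j = set0) ->
         P (\bigcap_(i in [set: 'I_m]) [set w | npts (pts w) (A i) = k i]) =
         (\prod_(i < m) fine (P [set w | npts (pts w) (A i) = k i]))%:E)].

Definition has_gap_larger (R : realType) (s : seq R) (r : R) : Prop :=
  exists x y, [/\ x \in s, y \in s, x < y, r < y - x &
                  forall z, z \in s -> ~ (x < z < y)].

Definition hf_intensity (R : realType) (n : nat) (p : R) (l : nat) : R :=
  n%:R * (p / 2) * ((1 - p) / 2) ^+ l.

From HB Require Import structures.
From mathcomp Require Import all_boot all_order all_algebra.
From mathcomp Require Import all_classical all_reals all_analysis.
From mathcomp Require Import ring lra.
Set Implicit Arguments. Unset Strict Implicit. Unset Printing Implicit Defensive.
Import Order.TTheory GRing.Theory Num.Theory.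
Local Open Scope classical_set_scope.
Local Open Scope ring_scope.

(* A node x followed by a gap longer than r lies in some cell [j/N, (j+1)/N[ of a
   grid of mesh 1/N <= r, and then [(j+1)/N, j/N + r] contains no node while
   [j/N, j/N + r] does.  For a Poisson process of intensity lam this has probability
   e^{-lam (r - 1/N)} - e^{-lam r} <= 2 (lam/N) e^{-lam r} as soon as lam/N <= 1/2,
   so summing over the N cells bounds the probability of a gap by 2 lam e^{-lam r}.
   On a street of level H(n) one has 2 lam <= n, and the choice of H(n) as a ceiling
   gives lam/sqrt n >= (q/2) n^eps. *)

Lemma exists_max_in (R : realDomainType) (s : seq R) (P : pred R) :
  has P s -> exists x, [/\ x \in s, P x & forall z, z \in s -> P z -> z <= x].
Proof.
elim: s => //= a s IH.
have [Pa _ | nPa /= /IH [x [xs Px xmax]]] := boolP (P a); last first.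
  exists x; split => //; first by rewrite inE xs orbT.
  move=> z; rewrite inE => /orP[/eqP -> Pa | ]; [by rewrite Pa in nPa | exact: xmax].
have [/IH [x [xs Px xmax]] | hasN] := boolP (has P s).
  exists (Num.max a x); split.
  - by rewrite /Num.max; case: ifP; rewrite inE ?eqxx ?xs ?orbT.
  - by rewrite /Num.max; case: ifP.
  - move=> z; rewrite inE le_max => /orP[/eqP -> _ | zs Pz]; first by rewrite lexx.
    by rewrite xmax ?orbT.
exists a; split; rewrite ?inE ?eqxx // => z /orP[/eqP -> _ // | zs Pz].
by case/hasP: hasN; exists z.
Qed.

Lemma exists_min_in (R : realDomainType) (s : seq R) (P : pred R) :
  has P s -> exists x, [/\ x \in s, P x & forall z, z \in s -> P z -> x <= z].
Proof.
move=> /hasP[z zs Pz].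
have [|x [/mapP[y ys ->] Py ymax]] := @exists_max_in R (map -%R s) (P \o -%R).
  by apply/hasP; exists (- z); rewrite ?map_f //= opprK.
exists y; split; first exact: ys.
  by rewrite /= opprK in Py.
by move=> t ts Pt; rewrite -lerN2 ymax ?map_f //= opprK.
Qed.

Section Configurations.
Variable R : realType.
Implicit Types (s : seq R) (A : set R).

Lemma npts_neq0 s A : (npts s A != 0)%N <-> exists2 z, z \in s & A z.
Proof.
rewrite /npts -lt0n -has_count.
split => [/hasP[z zs /asboolP] | [z zs Az]]; first by exists z.
by apply/hasP; exists z => //; apply/asboolP.
Qed.

Lemma npts_eq0 s A : npts s A = 0%N <-> forall z, z \in s -> ~ A z.
Proof.
split => [s0 z zs Az | noA].
  have : (npts s A != 0)%N by apply/npts_neq0; exists z.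
  by rewrite s0.
by apply/eqP; apply: contraT => /npts_neq0[z zs Az]; case: (noA z zs Az).
Qed.

Definition has_gap_over s (u v : R) : Prop :=
  [/\ npts s `[0, u[ != 0%N, npts s `[u, v] = 0%N & npts s `]v, 1] != 0%N].

Lemma has_gap_largerE s r : 0 <= r -> (forall x, x \in s -> 0 <= x <= 1) ->
  has_gap_larger s r <-> exists u v : rat,
    [/\ 0 <= ratr u :> R, ratr v <= 1 :> R, r < ratr v - ratr u &
         has_gap_over s (ratr u) (ratr v)].
Proof.
move=> r0 s01; split => [[x [y [xs ys xy rxy between]]] | [u [v [u0 v1 ruv]]]].
  have /andP[x0 _] := s01 x xs; have /andP[_ y1] := s01 y ys.
  set m := y - x - r.
  have /rat_in_itvoo[u] : x < x + m / 2 by rewrite /m; lra.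
  rewrite in_itv /= => /andP[xu um].
  have /rat_in_itvoo[v] : y - m / 2 < y by rewrite /m; lra.
  rewrite in_itv /= => /andP[mv vy].
  exists u, v; split; rewrite /m in um mv; try lra; split.
  - by apply/npts_neq0; exists x; rewrite //= in_itv /= x0.
  - apply/npts_eq0 => z zs; rewrite /= in_itv /= => /andP[uz zv].
    by apply: (between z zs); apply/andP; split; lra.
  - by apply/npts_neq0; exists y; rewrite //= in_itv /= y1 andbT.
move=> [/npts_neq0[z1 z1s] + hole /npts_neq0[z2 z2s]].
rewrite /= !in_itv /= => /andP[_ z1u] /andP[vz2 _].
have [x [xs xu xmax]] := @exists_max_in R s (fun z => z < ratr u)
  (introT hasP (ex_intro2 _ _ z1 z1s z1u)).
have [y [ys vy ymin]] := @exists_min_in R s (fun z => ratr v < z)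
  (introT hasP (ex_intro2 _ _ z2 z2s vz2)).
exists x, y; split => //; try lra.
move=> z zs /andP[xz zy].
have [zu | uz] := ltP z (ratr u); first by have := xmax z zs zu; lra.
have [vz | zv] := ltP (ratr v) z; first by have := ymin z zs vz; lra.
by move/npts_eq0: hole => /(_ z zs); apply; rewrite /= in_itv /= uz zv.
Qed.

Definition gap_window s (a delta r : R) : Prop :=
  [/\ a + r <= 1, npts s `[a + delta, a + r] = 0%N & npts s `[a, a + r] != 0%N].

Lemma has_gap_larger_window s r (N : nat) :
    (forall x, x \in s -> 0 <= x <= 1) -> (0 < N)%N -> N%:R^-1 <= r ->
  has_gap_larger s r -> exists j : 'I_N, gap_window s (j%:R / N%:R) N%:R^-1 r.
Proof.
move=> s01 N0 Nr [x [y [xs ys xy rxy between]]].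
have /andP[x0 _] := s01 x xs; have /andP[_ y1] := s01 y ys.
have NR0 : 0 < N%:R :> R by rewrite ltr0n.
have /andP[jx xj] := truncn_itv (mulr_ge0 x0 (ltW NR0)).
set j := Num.trunc (x * N%:R) in jx xj.
have jN : (j < N)%N.
  by rewrite -(ltr_nat R) (le_lt_trans jx) // -{2}[N%:R]mul1r ltr_pM2r //; lra.
exists (Ordinal jN) => /=; set a := j%:R / N%:R.
have ax : a <= x by rewrite ler_pdivrMr.
have xa : x < a + N%:R^-1 by rewrite -[N%:R^-1]mul1r -mulrDl natr1 ltr_pdivlMr.
split; first lra.
  apply/npts_eq0 => z zs; rewrite /= in_itv /= => /andP[az za].
  by apply: (between z zs); apply/andP; split; lra.
by apply/npts_neq0; exists x; rewrite //= in_itv /=; apply/andP; split; lra.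
Qed.

End Configurations.

Lemma expR_le1D2x (R : realType) (x : R) : 0 <= x <= 2^-1 -> expR x <= 1 + 2 * x.
Proof.
move=> /andP[x0 x1].
have : 1 - x <= expR (- x) := expR_ge1Dx (- x).
rewrite expRN -(ler_pM2r (expR_gt0 x)) mulVf ?gt_eqF ?expR_gt0 //.
nra.
Qed.

Lemma measureD_EFin d (T : measurableType d) (R : realType)
    (mu : {content set T -> \bar R}) (A B : set T) (x y : R) :
    measurable A -> measurable B -> B `<=` A -> mu A = x%:E -> mu B = y%:E ->
  mu (A `\` B) = (x - y)%:E.
Proof. by move=> mA mB BA muA muB; rewrite measureD // muA ?ltry // setIidr // muB. Qed.

Section PoissonGaps.
Variables (R : realType) (d : measure_display) (T : measurableType d).
Variables (P : probability T R) (lam : R) (pts : T -> seq R).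
Hypothesis proc : poisson_process_on_unit_segment P lam pts.

Let pts01 w x : x \in pts w -> 0 <= x <= 1.
Proof. by case: proc => + _ _ _; apply. Qed.

Let measurable_npts_eq0 (A : set R) : measurable A -> A `<=` `[0, 1] ->
  measurable [set w | npts (pts w) A = 0%N].
Proof. by case: proc => _ + _ _; apply. Qed.

Let subset_itv01 (a b : R) ba bb : 0 <= a -> b <= 1 ->
  [set` Interval (BSide ba a) (BSide bb b)] `<=` `[0, 1]%classic.
Proof. by move=> a0 b1; apply: subset_itvScc; case: ba; case: bb; rewrite bnd_simp. Qed.

Lemma prob_npts_itv_eq0 a b : 0 <= a -> a <= b -> b <= 1 ->
  P [set w | npts (pts w) `[a, b] = 0%N] = (expR (- (lam * (b - a))))%:E.
Proof.
move=> a0 ab b1; case: proc => _ _ hpois _.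
rewrite hpois; [| exact: measurable_itv | exact: subset_itv01].
rewrite /pois_pmf expr0 fact0 mulr1 divr1 lebesgue_measure_itv /= lte_fin.
by case: ltgtP ab => // -> _; rewrite subrr.
Qed.

Lemma measurable_has_gap_larger r : 0 <= r ->
  measurable [set w | has_gap_larger (pts w) r].
Proof.
move=> r0.
pose G (u v : rat) := [set w | [/\ 0 <= ratr u :> R, ratr v <= 1 :> R,
  r < ratr v - ratr u & has_gap_over (pts w) (ratr u) (ratr v)]].
rewrite (_ : [set w | _] = \bigcup_u \bigcup_v G u v).
  apply: bigcupT_measurable_rat => u; apply: bigcupT_measurable_rat => v.
  have [[u0 v1 ruv] | nuv] :=
    pselect [/\ 0 <= ratr u :> R, ratr v <= 1 :> R & r < ratr v - ratr u].
    rewrite (_ : G u v = ~` [set w | npts (pts w) `[0, ratr u[ = 0%N]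
        `&` [set w | npts (pts w) `[ratr u, ratr v] = 0%N]
        `&` ~` [set w | npts (pts w) `]ratr v, 1] = 0%N]).
      by apply: measurableI; [apply: measurableI; [apply: measurableC|]|apply: measurableC];
        (apply: measurable_npts_eq0; [exact: measurable_itv | apply: subset_itv01; lra]).
    apply/seteqP; split => w /=.
      by case=> _ _ _ [/eqP ? ? /eqP ?].
    by case=> [[/eqP ? ?] /eqP ?].
  by rewrite (_ : G u v = set0) //; apply/seteqP; split => w // [? ? ? _]; apply: nuv.
apply/seteqP; split => w /=.
  by move=> /(has_gap_largerE r0 (@pts01 w))[u [v guv]]; exists u => //; exists v.
by move=> [u _ [v _ guv]]; apply/(has_gap_largerE r0 (@pts01 w)); exists u, v.
Qed.

Lemma gap_window_eventE a delta r : a + r <= 1 ->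
  [set w | gap_window (pts w) a delta r] =
  [set w | npts (pts w) `[a + delta, a + r] = 0%N] `\`
  [set w | npts (pts w) `[a, a + r] = 0%N].
Proof. by move=> ar1; apply/seteqP; split => w /=; [case=> _ ? /eqP | case=> ? /eqP]. Qed.

Lemma gap_window_event0 a delta r : ~ (a + r <= 1) ->
  [set w | gap_window (pts w) a delta r] = set0.
Proof. by move=> ar1; apply/seteqP; split => w // [? _ _]; apply: ar1. Qed.

Lemma measurable_gap_window a delta r : 0 <= a -> 0 <= delta ->
  measurable [set w | gap_window (pts w) a delta r].
Proof.
move=> a0 delta0.
have [ar1 | ar1] := pselect (a + r <= 1); last by rewrite gap_window_event0.
rewrite gap_window_eventE //; apply: measurableD;
  by apply: measurable_npts_eq0; [exact: measurable_itv | apply: subset_itv01; lra].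
Qed.

Lemma prob_gap_window_le a delta r :
    0 <= a -> 0 <= delta <= r -> 0 <= lam * delta <= 2^-1 ->
  (P [set w | gap_window (pts w) a delta r] <=
   (2 * lam * delta * expR (- (lam * r)))%:E)%E.
Proof.
move=> a0 /andP[delta0 delta_r] lam_delta.
have [ar1 | ar1] := pselect (a + r <= 1); last first.
  have /andP[ld0 _] := lam_delta.
  by rewrite gap_window_event0 // measure0 lee_fin mulr_ge0 ?expR_ge0 // -mulrA mulr_ge0.
have mE c : 0 <= c -> c <= a + r ->
    measurable [set w | npts (pts w) `[c, a + r] = 0%N].
  by move=> c0 car; apply: measurable_npts_eq0; [exact: measurable_itv | apply: subset_itv01].
have BA : [set w | npts (pts w) `[a, a + r] = 0%N] `<=`
          [set w | npts (pts w) `[a + delta, a + r] = 0%N].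
  move=> w /npts_eq0 empty; apply/npts_eq0 => z zs; rewrite /= !in_itv /= => /andP[az za].
  by apply: (empty z zs); rewrite /= in_itv /=; apply/andP; split; lra.
rewrite gap_window_eventE // (measureD_EFin (mE _ _ _) (mE _ _ _) BA
  (prob_npts_itv_eq0 _ _ _) (prob_npts_itv_eq0 _ _ _)); [| lra ..].
have -> : a + r - (a + delta) = r - delta by ring.
have -> : a + r - a = r by ring.
rewrite lee_fin.
have -> : expR (- (lam * (r - delta))) = expR (- (lam * r)) * expR (lam * delta).
  by rewrite -expRD; congr expR; ring.
have := expR_le1D2x lam_delta; have := expR_gt0 (- (lam * r)); nra.
Qed.

Lemma prob_has_gap_larger_le r : 0 <= lam -> 0 < r ->
  (P [set w | has_gap_larger (pts w) r] <= (2 * lam * expR (- (lam * r)))%:E)%E.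
Proof.
move=> lam0 r0.
have [N ltN] : exists N : nat, 2 * lam + r^-1 < N%:R.
  by exists (Num.trunc (2 * lam + r^-1)).+1; exact: truncnS_gt.
have rV0 : 0 < r^-1 by rewrite invr_gt0.
have N0 : 0 < N%:R :> R by lra.
have Nr : N%:R^-1 <= r by rewrite invf_ple ?posrE //; lra.
have lamN : 0 <= lam * N%:R^-1 <= 2^-1.
  by rewrite mulr_ge0 ?invr_ge0 ?(ltW N0) //= ler_pdivrMr //; lra.
pose F (j : nat) := [set w | gap_window (pts w) (j%:R / N%:R) N%:R^-1 r].
have cover : [set w | has_gap_larger (pts w) r] `<=` \big[setU/set0]_(j < N) F j.
  move=> w /(has_gap_larger_window (@pts01 w) _ Nr)[|j Fj]; first by rewrite -(ltr0n R).
  by rewrite -bigcup_mkord; exists j => //; rewrite /= ltn_ord.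
have grid0 (j : nat) : 0 <= j%:R / N%:R :> R by rewrite divr_ge0 ?(ltW N0).
have NV0 : 0 <= N%:R^-1 :> R by rewrite invr_ge0 ltW.
apply: le_trans (@content_subadditive _ _ _ P _ F N
  (fun j _ => measurable_gap_window r (grid0 j) NV0)
  (measurable_has_gap_larger (ltW r0)) cover) _.
have NVr : 0 <= (N%:R^-1 : R) <= r by rewrite NV0 Nr.
apply: le_trans (lee_sum _ (fun (j : 'I_N) _ => prob_gap_window_le (grid0 j) NVr lamN)) _.
rewrite sumEFin sumr_const card_ord lee_fin -[X in X <= _]mulr_natr.
by rewrite mulrAC divfK ?gt_eqF.
Qed.

End PoissonGaps.

Lemma expr_ceil_ln_lt (R : realType) (b x : R) (l : nat) :
  1 < b -> 0 < x -> l%:Z = Num.ceil (ln x / ln b) -> b ^+ l < x * b.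
Proof.
move=> b1 x0 hl; have b0 : 0 < b by apply: lt_trans b1.
have lnb : 0 < ln b := ln_gt0 b1.
have := ceilB1_lt (ln x / ln b); rewrite -hl ltr_pdivlMr //.
rewrite -ltr_ln ?posrE ?exprn_gt0 ?mulr_gt0 // lnXn // lnM ?posrE //.
by rewrite intrB mulrBl -mulr_natl; lra.
Qed.

Lemma hf_intensity_ge0 (R : realType) n (p : R) l :
  0 <= p <= 1 -> 0 <= hf_intensity n p l.
Proof. by case/andP=> p0 p1; rewrite !mulr_ge0 ?exprn_ge0 ?divr_ge0 ?subr_ge0. Qed.

Lemma hf_intensity_le (R : realType) n (p : R) l :
  0 <= p <= 1 -> 2 * hf_intensity n p l <= n%:R.
Proof.
case/andP=> p0 p1; set X := ((1 - p) / 2) ^+ l.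
have X0 : 0 <= X by rewrite exprn_ge0 ?divr_ge0 ?subr_ge0.
have X1 : X <= 1 by rewrite exprn_ile1 ?divr_ge0 ?subr_ge0 ?ler_pdivrMr //; lra.
have n0 : 0 <= n%:R :> R := ler0n R n.
have pX1 : p * X <= 1 by nra.
rewrite /hf_intensity -/X; nra.
Qed.

Lemma hf_intensity_range_ge (R : realType) n (p eps : R) l :
    (0 < n)%N -> 0 < p < 1 ->
    l%:Z = Num.ceil (ln (n%:R `^ (2^-1 - eps) * p / 2) / ln (2 / (1 - p))) ->
  (1 - p) / 2 * n%:R `^ eps <= hf_intensity n p l * (Num.sqrt n%:R)^-1.
Proof.
move=> n_gt0 /andP[p0 p1] hl; set q := 1 - p.
have q0 : 0 < q by rewrite subr_gt0.
have n0 : 0 < n%:R :> R by rewrite ltr0n.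
set W := n%:R `^ (2^-1 - eps); set E := n%:R `^ eps; set S := Num.sqrt n%:R.
have W0 : 0 < W by rewrite powR_gt0.
have E0 : 0 < E by rewrite powR_gt0.
have S0 : 0 < S by rewrite sqrtr_gt0.
have WE : W * E = S by rewrite -powRD ?subrK ?powR12_sqrt ?ltW ?gt_eqF ?implybT.
have SS : S * S = n%:R by rewrite -expr2 sqr_sqrtr ?ltW.
set A := (2 / q) ^+ l.
have A0 : 0 < A by rewrite exprn_gt0 ?divr_gt0.
have Aq : A * q < W * p.
  have q2 : 1 < 2 / q by rewrite ltr_pdivlMr // mul1r /q; lra.
  have Wp2 : 0 < W * p / 2 by rewrite divr_gt0 ?mulr_gt0.
  have := expr_ceil_ln_lt q2 Wp2 hl.
  have -> : W * p / 2 * (2 / q) = W * p / q by field; rewrite gt_eqF.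
  by rewrite ltr_pdivlMr.
have -> : hf_intensity n p l = n%:R * (p / 2) / A.
  by rewrite /hf_intensity /A -/q -[q / 2]invf_div exprVn.
rewrite ler_pdivlMr // ler_pdivlMr // -SS -WE.
have : A * q * (E * (W * E)) <= W * p * (E * (W * E)).
  by rewrite ler_pM2r ?mulr_gt0 // ltW.
lra.
Qed.

Theorem lemma6 (R : realType) (d : measure_display) (T : measurableType d)
    (P : probability T R) (n : nat) (p eps : R) (l : nat) (pts : T -> seq R) :
  (0 < n)%N -> 0 < p -> p < 1 ->
  2 < ln (4 / (1 - p)) / ln 2 ->
  0 < eps ->
  l%:Z = Num.ceil (ln (n%:R `^ (2^-1 - eps) * p / 2) / ln (2 / (1 - p))) ->
  poisson_process_on_unit_segment P (hf_intensity n p l) pts ->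
  (P [set w | has_gap_larger (pts w) (Num.sqrt n%:R)^-1]
     <= (n%:R * expR (- ((1 - p) / 2) * n%:R `^ eps))%:E)%E.
Proof.
move=> n0 p0 p1 _ _ hl proc.
have p01 : 0 <= p <= 1 by rewrite !ltW.
have r0 : 0 < (Num.sqrt n%:R)^-1 :> R by rewrite invr_gt0 sqrtr_gt0 ltr0n.
apply: le_trans (prob_has_gap_larger_le proc (hf_intensity_ge0 n l p01) r0) _.
rewrite lee_fin; apply: ler_pM.
- by rewrite mulr_ge0 ?hf_intensity_ge0.
- exact: expR_ge0.
- exact: hf_intensity_le.
- by rewrite ler_expR mulNr lerN2 hf_intensity_range_ge // p0 p1.
Qed.
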